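(* Every infinite sequence $(w_n)_{n\in\mathbb N}$ of words over a finite alphabet $A$ admits a subsequence that is $(\vec u,\vec B)$-adequate for some factorization pattern $(\vec u,\vec B)$.
   Context: For $B\subseteq A$, $B^{\circledast}$ is the set of words over $B$ in which every symbol of $B$ occurs. A factorization pattern is $(\vec u,\vec B)$ with $\vec u=(u_0,\dots,u_p)\in(A^* )^{p+1}$, $\vec B=(B_1,\dots,B_p)$ nonempty subsets of $A$, $p\ge0$. $L(\vec u,\vec B,n)=u_0(B_1^{\circledast})^nu_1\cdots(B_p^{\circledast})^nu_p$. A sequence $(w_n)_n$ is $(\vec u,\vec B)$-adequate if $w_n\in L(\vec u,\vec B,n)$ for every $n$. *)

From mathcomp Require Import all_boot.
Set Implicit Arguments. Unset Strict Implicit. Unset Printing Implicit Defensive.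

Section Words.
Variable A : finType.

Definition fullword (B : {set A}) (w : seq A) : bool :=
  all (fun a => a \in B) w && [forall b in B, b \in w].

Definition in_pow (P : seq A -> bool) (n : nat) (w : seq A) : Prop :=
  exists ws : seq (seq A), size ws = n /\ all P ws /\ w = flatten ws.

(* v_1 (B_1^⊛)^n ... : words of  (B_1^⊛)^n u_1 (B_2^⊛)^n u_2 ... (B_p^⊛)^n u_p *)
Fixpoint in_tail (n : nat) (Bs : seq {set A}) (us : seq (seq A)) (w : seq A)
  : Prop :=
  match Bs, us with
  | [::], [::] => w = [::]
  | B :: Bs', u :: us' =>
      exists x y, w = x ++ u ++ y /\ in_pow (fullword B) n x /\ in_tail n Bs' us' y
  | _, _ => False
  end.

Definition fact_pattern (u : seq (seq A)) (Bs : seq {set A}) : Prop :=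
  size u = (size Bs).+1 /\ all (fun B => B != set0) Bs.

(* L(u,B,n) = u_0 (B_1^⊛)^n u_1 ... (B_p^⊛)^n u_p *)
Definition inL (u : seq (seq A)) (Bs : seq {set A}) (n : nat) (w : seq A) : Prop :=
  match u with
  | [::] => False
  | u0 :: us => exists y, w = u0 ++ y /\ in_tail n Bs us y
  end.

Definition adequate (u : seq (seq A)) (Bs : seq {set A}) (w : nat -> seq A) : Prop :=
  forall n, inL u Bs n (w n).
End Words.

(* Induction on the alphabet D.  If, for every K, almost all w_n begin with K
   factors from D^⊛, pass to a subsequence growing so fast that w_j has at least
   (|w_i| + 1)(j + 1) such leading factors for i < j: the pattern
   (D^⊛)^n c_1 (D^⊛)^n c_2 ... c_m (D^⊛)^n, where c_1...c_m is the first term,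
   then fits every term.  Otherwise infinitely many w_n begin with fewer than K
   factors, and we induct on K.  Words missing a letter of D are handled by the
   induction on D.  A word containing all of D splits as y a z where y a is the
   shortest prefix containing all of D: y misses a letter and z begins with fewer
   than K - 1 factors; pigeonholing fixes a, and the patterns found for y and z
   are joined around a.  Joining needs both patterns along the same subsequence,
   so the induction proves that some subsequence is adequate along each of its
   own subsequences ("hereditary"). *)

From Stdlib Require Import Classical ClassicalEpsilon.
From mathcomp Require Import all_boot zify.
Set Implicit Arguments. Unset Strict Implicit. Unset Printing Implicit Defensive.

Definition increasing (f : nat -> nat) := forall n, f n < f n.+1.

Lemma increasing_homo f : increasing f -> {homo f : m n / m <= n}.
Proof.
by move=> f_incr; apply: homo_leq leqnn _ (fun n => ltnW (f_incr n)) => m n p /leq_trans; apply.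
Qed.

Lemma increasing_ge f : increasing f -> forall n, n <= f n.
Proof. by move=> f_incr; elim=> // n IHn; apply: leq_ltn_trans IHn (f_incr n). Qed.

Lemma increasing_comp f g : increasing f -> increasing g -> increasing (f \o g).
Proof.
by move=> f_incr g_incr n; apply: leq_trans (f_incr (g n)) (increasing_homo _ _).
Qed.

Lemma increasing_choice (P : nat -> nat -> nat -> Prop) :
  (forall k m, exists n, m < n /\ P k m n) ->
  exists rho, increasing rho /\ forall k, P k (rho k) (rho k.+1).
Proof.
move=> Pex; have [next Hnext] := choice _ (fun km => Pex km.1 km.2).
pose fix rho k := if k is k'.+1 then next (k', rho k') else 0.
by exists rho; split=> k; case: (Hnext (k, rho k)).
Qed.

Lemma infinitely_often_subseq (P : nat -> Prop) :
  (forall N, exists n, N <= n /\ P n) -> exists phi, increasing phi /\ forall k, P (phi k).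
Proof.
move=> Pio; have [rho [rho_incr HP]] := increasing_choice (fun k m => Pio m.+1).
by exists (rho \o succn); split=> k; [apply: rho_incr | apply: HP].
Qed.

Lemma infinite_pigeonhole (T : finType) (f : nat -> T) :
  exists c phi, increasing phi /\ forall k, f (phi k) = c.
Proof.
suff [c Hc] : exists c, forall N, exists n, N <= n /\ f n = c.
  by have [phi] := infinitely_often_subseq Hc; exists c, phi.
apply: NNPP => no_c.
have [bound Hbound] : exists bound : T -> nat, forall c n, bound c <= n -> f n <> c.
  apply: (choice (fun c N => forall n, N <= n -> f n <> c)) => c.
  apply: NNPP => no_bound; apply: no_c; exists c => N.
  apply: NNPP => no_n; apply: no_bound; exists N => n le_Nn fn_c.
  by apply: no_n; exists n.
exact: (Hbound _ _ (leq_bigmax (f (\max_c bound c)))).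
Qed.

Section Words.
Variable A : finType.
Implicit Types (D : {set A}) (w : nat -> seq A).

Notation word_over D x := (all (fun a => a \in D) x).
Notation covers D x := [forall b in D, b \in x].

Definition has_full_blocks D K (x : seq A) :=
  exists bs r, K <= size bs /\ all (fullword D) bs /\ x = flatten bs ++ r.

Definition patterned w := exists u Bs, fact_pattern u Bs /\ adequate u Bs w.

Definition hereditary w := forall psi, increasing psi -> patterned (w \o psi).

Definition has_hereditary_subseq w := exists phi, increasing phi /\ hereditary (w \o phi).

Lemma hereditary_comp w phi : increasing phi -> hereditary w -> hereditary (w \o phi).
Proof. by move=> phi_incr w_her psi /(increasing_comp phi_incr)/w_her. Qed.

Lemma has_hereditary_subseq_comp w phi :
  increasing phi -> has_hereditary_subseq (w \o phi) -> has_hereditary_subseq w.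
Proof.
by move=> phi_incr [psi [psi_incr her]]; exists (phi \o psi); split => //; apply: increasing_comp.
Qed.

Lemma hereditary_nil w : (forall n, w n = [::]) -> hereditary w.
Proof.
move=> w_nil psi _; exists [:: [::]], [::]; split => // n.
by exists [::]; rewrite /= w_nil.
Qed.

Lemma fullword_widen D (x b y : seq A) :
  fullword D b -> word_over D x -> word_over D y -> fullword D (x ++ b ++ y).
Proof.
case/andP=> b_over /forall_inP b_cov x_over y_over; apply/andP; split.
  by rewrite !all_cat x_over b_over y_over.
by apply/forall_inP => c /b_cov c_b; rewrite !mem_cat c_b orbT.
Qed.

Lemma all_fullword_flatten D bs : all (fullword D) bs -> word_over D (flatten bs).
Proof. by elim: bs => //= b bs IHbs /andP[/andP[b_over _] /IHbs]; rewrite all_cat b_over. Qed.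

Lemma in_pow_flatten D n (p r : seq A) bs :
  0 < n <= size bs -> all (fullword D) bs -> word_over D p -> word_over D r ->
  in_pow (fullword D) n (p ++ flatten bs ++ r).
Proof.
elim: n p bs => [//|[|n] IHn] p [|b bs] //= n_bs /andP[b_full bs_full] p_over r_over.
  exists [:: p ++ (b ++ flatten bs) ++ r]; rewrite /= cats0 andbT -catA; split=> //.
  by split=> //; apply: fullword_widen; rewrite // all_cat r_over all_fullword_flatten.
have [ws [size_ws [ws_full flat_ws]]] := IHn [::] bs n_bs bs_full isT r_over.
exists ((p ++ b) :: ws); split; first by rewrite /= size_ws.
split; first by rewrite /= ws_full andbT -[p ++ b]cats0 -catA fullword_widen.
by rewrite /= -flat_ws !catA cats0.
Qed.

(* The gaps of the pattern (D^⊛)^n c_1 (D^⊛)^n ... c_m (D^⊛)^n read off from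
   v = c_1...c_m; at n = 0 it is v itself. *)
Definition letter_gaps (v : seq A) : seq (seq A) := map (fun c => [:: c]) v ++ [:: [::]].

Lemma in_tail_letter_gaps0 D v : in_tail 0 (nseq (size v).+1 D) (letter_gaps v) v.
Proof.
rewrite /letter_gaps; elim: v => [|c v IHv] /=.
  by exists [::], [::]; split=> //; split=> //; exists [::].
by exists [::], v; split=> //; split=> //; exists [::].
Qed.

Lemma in_tail_letter_gaps D n v p bs r :
  0 < n -> word_over D v -> word_over D p -> all (fullword D) bs -> word_over D r ->
  (size v).+1 * n.+1 <= size bs ->
  in_tail n (nseq (size v).+1 D) (letter_gaps v) (p ++ flatten bs ++ r).
Proof.
rewrite /letter_gaps => n_gt0; elim: v p bs => [|c v IHv] p bs /= v_over p_over bs_full r_over.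
  rewrite mul1n => n_bs; exists (p ++ flatten bs ++ r), [::]; rewrite cats0.
  by do !split; apply: in_pow_flatten; rewrite // n_gt0 ltnW.
case/andP: v_over => c_D v_over; rewrite mulSn => size_bs.
have [bs1 [b [bs2 [bs_eq size_bs1]]]] : exists bs1 b bs2, bs = bs1 ++ b :: bs2 /\ size bs1 = n.
  exists (take n bs), (nth [::] bs n), (drop n.+1 bs).
  by rewrite -drop_nth ?cat_take_drop ?size_takel //; lia.
subst bs; move: bs_full size_bs; rewrite all_cat /= size_cat /=.
case/and3P=> bs1_full b_full bs2_full.
rewrite size_bs1 => size_bs2; have /andP[b_over /forall_inP b_cov] := b_full.
case/splitPr: (b_cov c c_D) b_over => p1 q1; rewrite all_cat /= => /and3P[p1_over _ q1_over].
exists (p ++ flatten bs1 ++ p1), (q1 ++ flatten bs2 ++ r); split.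
  by rewrite flatten_cat /= -!catA.
split; first by apply: in_pow_flatten => //; rewrite n_gt0 size_bs1 leqnn.
refine (IHv q1 bs2 v_over q1_over bs2_full r_over _); lia.
Qed.

Lemma hereditary_of_full_blocks D w :
  D != set0 -> (forall n, word_over D (w n)) ->
  (forall i j, i < j -> has_full_blocks D ((size (w i)).+1 * j.+1) (w j)) ->
  hereditary w.
Proof.
move=> D_neq0 w_over w_blocks psi psi_incr; set v := w (psi 0).
exists ([::] :: letter_gaps v), (nseq (size v).+1 D); split.
  by rewrite /fact_pattern /= size_cat size_map size_nseq addn1 all_nseq D_neq0 orbT.
case=> [|n]; first by exists v; split=> //; apply: in_tail_letter_gaps0.
have psi0_lt : psi 0 < psi n.+1 by apply: leq_trans (psi_incr 0) (increasing_homo _ _).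
have [bs [r [size_bs [bs_full w_eq]]]] := w_blocks _ _ psi0_lt.
exists (w (psi n.+1)); split=> //; rewrite /= w_eq -[flatten bs ++ r]cat0s.
have := w_over (psi n.+1); rewrite w_eq all_cat => /andP[_ r_over].
apply: in_tail_letter_gaps => //; first exact: w_over.
by apply: leq_trans size_bs; rewrite leq_mul2l ltnS increasing_ge ?orbT.
Qed.

Definition join_pattern (u : seq (seq A)) (v : seq A) (u' : seq (seq A)) :=
  match u, u' with
  | u0 :: us, u0' :: us' => belast u0 us ++ (last u0 us ++ v ++ u0') :: us'
  | _, _ => [::]
  end.

Lemma fact_pattern_join u Bs u' Bs' v :
  fact_pattern u Bs -> fact_pattern u' Bs' -> fact_pattern (join_pattern u v u') (Bs ++ Bs').
Proof.
case: u => [|u0 us] [//= size_us Bs_neq0]; case: u' => [|u0' us'] [//= size_us' Bs'_neq0].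
split; last by rewrite all_cat Bs_neq0.
by rewrite size_cat /= size_belast size_cat; case: size_us size_us' => -> ->; rewrite addnS.
Qed.

Lemma inL_join n u Bs u' Bs' v x x' :
  inL u Bs n x -> inL u' Bs' n x' -> inL (join_pattern u v u') (Bs ++ Bs') n (x ++ v ++ x').
Proof.
case: u => [//|u0 us]; case: u' => [//|u0' us'] /= x_in [y' [-> y'_tail]].
elim: us Bs u0 x x_in => [|u1 us IHus] [|B Bs] u0 x [y [-> y_tail]] //=.
  by rewrite y_tail; exists y'; rewrite cats0 !catA.
case: y_tail => x1 [y1 [-> [x1_pow y1_tail]]].
have := IHus Bs u1 (u1 ++ y1) (ex_intro _ y1 (conj erefl y1_tail)).
case: (belast u1 us ++ _) => [//|g0 gs] [Y [Y_eq Y_tail]].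
exists (x1 ++ g0 ++ Y); split; last by exists x1, Y.
by rewrite -catA -Y_eq !catA.
Qed.

Lemma hereditary_cat w w1 w2 a :
  hereditary w1 -> hereditary w2 -> (forall n, w n = w1 n ++ a :: w2 n) -> hereditary w.
Proof.
move=> w1_her w2_her w_eq psi psi_incr.
have [u [Bs [u_Bs w1_ad]]] := w1_her psi psi_incr.
have [u' [Bs' [u'_Bs' w2_ad]]] := w2_her psi psi_incr.
exists (join_pattern u [:: a] u'), (Bs ++ Bs'); split; first exact: fact_pattern_join.
by move=> n; rewrite /= w_eq; apply: inL_join.
Qed.

Lemma has_full_blocks_le D K K' x : K' <= K -> has_full_blocks D K x -> has_full_blocks D K' x.
Proof. by move=> le_K [bs [r [K_bs blocks]]]; exists bs, r; rewrite (leq_trans le_K). Qed.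

Lemma has_full_blocks_cat D K b x :
  fullword D b -> has_full_blocks D K x -> has_full_blocks D K.+1 (b ++ x).
Proof.
by move=> b_full [bs [r [K_bs [bs_full ->]]]]; exists (b :: bs), r; rewrite /= b_full catA.
Qed.

Lemma unbounded_blocks_subseq D w :
  D != set0 -> (forall n, word_over D (w n)) ->
  (forall K, exists N, forall n, N <= n -> has_full_blocks D K (w n)) ->
  has_hereditary_subseq w.
Proof.
move=> D_neq0 w_over w_blocks.
pose bound k m := (\max_(i < m.+1) size (w i)).+1 * k.+2.
have [rho [rho_incr rho_blocks]] :
    exists rho, increasing rho /\ forall k, has_full_blocks D (bound k (rho k)) (w (rho k.+1)).
  apply: (@increasing_choice (fun k m n => has_full_blocks D (bound k m) (w n))) => k m.
  have [N N_blocks] := w_blocks (bound k m).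
  exists (maxn N m.+1); rewrite leq_max leqnn orbT; split=> //.
  by apply: N_blocks; rewrite leq_maxl.
exists rho; split=> //; apply: hereditary_of_full_blocks D_neq0 (fun n => w_over _) _.
move=> i [//|j] lt_ij; apply: has_full_blocks_le (rho_blocks j).
have le_rho : rho i < (rho j).+1 by rewrite ltnS increasing_homo.
by rewrite leq_mul2r ltnS (leq_bigmax (Ordinal le_rho)).
Qed.

Lemma covers_split D x :
  D != set0 -> covers D x ->
  exists y a z, x = y ++ a :: z /\ ~~ covers D y /\ covers D (rcons y a).
Proof.
move=> /set0Pn[d d_D]; elim/last_ind: x => [/forall_inP/(_ d d_D)//|x c IHx x_cov].
have [/IHx[y [a [z [-> y_split]]]]|x_ncov] := boolP (covers D x).
  by exists y, a, (rcons z c); rewrite rcons_cat.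
by exists x, c, [::]; rewrite cats1.
Qed.

Section AlphabetInduction.
Variable D : {set A}.
Hypothesis IH : forall D' : {set A}, #|D'| < #|D| ->
  forall w, (forall n, word_over D' (w n)) -> has_hereditary_subseq w.

Lemma noncovering_subseq w :
  (forall n, word_over D (w n)) -> (forall n, ~~ covers D (w n)) -> has_hereditary_subseq w.
Proof.
move=> w_over w_ncov.
have [[b|] [phi [phi_incr phi_b]]] :=
  infinite_pigeonhole (fun n => [pick b in D | b \notin w n]).
  have b_miss k : (b \in D) && (b \notin w (phi k)).
    by move: (phi_b k); case: pickP => // b' b'_miss [<-].
  apply: has_hereditary_subseq_comp phi_incr _; apply: (IH (D' := D :\ b)).
    by rewrite [#|D|](cardsD1 b) (andP (b_miss 0)).1.
  move=> k; apply/allP => x x_w; rewrite in_setD1 (allP (w_over _) x x_w) andbT.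
  by apply: contraNneq (andP (b_miss k)).2 => <-.
move: (phi_b 0) (w_ncov (phi 0)); case: pickP => // no_miss _.
by rewrite negb_forall_in => /existsP[x /andP[x_D x_w]]; move: (no_miss x); rewrite x_D x_w.
Qed.

Lemma covering_subseq K w :
  (forall w', (forall n, word_over D (w' n)) ->
     (forall n, ~ has_full_blocks D K (w' n)) -> has_hereditary_subseq w') ->
  D != set0 -> (forall n, word_over D (w n)) -> (forall n, covers D (w n)) ->
  (forall n, ~ has_full_blocks D K.+1 (w n)) -> has_hereditary_subseq w.
Proof.
move=> IHK D_neq0 w_over w_cov w_nblocks.
have /choice[a_of a_split] n : exists a y z,
    w n = y ++ a :: z /\ ~~ covers D y /\ covers D (rcons y a).
  by have [y [a [z]]] := covers_split D_neq0 (w_cov n); exists a, y, z.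
have [a [phi [phi_incr phi_a]]] := infinite_pigeonhole a_of.
have /choice[yz yz_split] k : exists yz : seq A * seq A,
    w (phi k) = yz.1 ++ a :: yz.2 /\ ~~ covers D yz.1 /\ covers D (rcons yz.1 a).
  by have [y [z]] := a_split (phi k); rewrite phi_a; exists (y, z).
have yaz_over k : [&& word_over D (yz k).1, a \in D & word_over D (yz k).2].
  by have := w_over (phi k); rewrite (yz_split k).1 all_cat /=.
have [phi2 [phi2_incr y_her]] : has_hereditary_subseq (fun k => (yz k).1).
  apply: noncovering_subseq => k; last exact: (yz_split k).2.1.
  by case/and3P: (yaz_over k).
have [phi3 [phi3_incr z_her]] : has_hereditary_subseq (fun k => (yz (phi2 k)).2).
  apply: IHK => k; first by case/and3P: (yaz_over (phi2 k)).
  move=> z_blocks; apply: (w_nblocks (phi (phi2 k))).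
  rewrite (yz_split _).1 -cat_rcons; apply: has_full_blocks_cat z_blocks.
  by rewrite /fullword all_rcons (yz_split _).2.2; case/and3P: (yaz_over (phi2 k)) => -> -> _.
exists (phi \o phi2 \o phi3); split; first by do 2!apply: increasing_comp.
apply: (hereditary_cat (w1 := fun k => (yz (phi2 (phi3 k))).1) (a := a)).
- exact: (hereditary_comp phi3_incr y_her).
- exact: z_her.
- by move=> k; rewrite /= (yz_split _).1.
Qed.

Lemma bounded_blocks_subseq K w :
  D != set0 -> (forall n, word_over D (w n)) ->
  (forall n, ~ has_full_blocks D K (w n)) -> has_hereditary_subseq w.
Proof.
move=> D_neq0; elim: K w => [|K IHK] w w_over w_nblocks.
  by case: (w_nblocks 0); exists [::], (w 0).
have [c [phi [phi_incr phi_c]]] := infinite_pigeonhole (fun n => covers D (w n)).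
apply: has_hereditary_subseq_comp phi_incr _; case: c phi_c => phi_c.
  apply: covering_subseq IHK D_neq0 _ _ _ => k;
    [exact: w_over | exact: phi_c | exact: w_nblocks].
by apply: (@noncovering_subseq (w \o phi)) => k; [exact: w_over | rewrite /= phi_c].
Qed.

End AlphabetInduction.

Lemma has_hereditary_subseq_over D w :
  (forall n, word_over D (w n)) -> has_hereditary_subseq w.
Proof.
have [m] := ubnP #|D|; elim: m D w => // m IHm D w /ltnSE D_le w_over.
have IH D' : #|D'| < #|D| ->
    forall w', (forall n, word_over D' (w' n)) -> has_hereditary_subseq w'.
  by move=> lt_D' w'; apply: IHm; apply: leq_trans lt_D' D_le.
have [D0|D_neq0] := eqVneq D set0.
  exists id; split=> //; apply: hereditary_nil => n /=.
  by move: (w_over n); rewrite D0; case: (w n) => //= a x; rewrite in_set0.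
have [[K K_io]|K_ev] :=
  classic (exists K, forall N, exists n, N <= n /\ ~ has_full_blocks D K (w n)).
  have [phi [phi_incr phi_nblocks]] := infinitely_often_subseq K_io.
  apply: has_hereditary_subseq_comp phi_incr _.
  exact: (@bounded_blocks_subseq D IH K (w \o phi) D_neq0 (fun n => w_over _) phi_nblocks).
apply: unbounded_blocks_subseq D_neq0 w_over _ => K; apply: NNPP => no_N; apply: K_ev.
exists K => N; apply: NNPP => no_n; apply: no_N; exists N => n le_Nn.
by apply: NNPP => n_nblocks; apply: no_n; exists n.
Qed.

End Words.

Theorem lemma3p1 (A : finType) (w : nat -> seq A) :
  exists phi : nat -> nat,
    (forall n, phi n < phi n.+1) /\
    exists (u : seq (seq A)) (Bs : seq {set A}),
      fact_pattern u Bs /\ adequate u Bs (fun n => w (phi n)).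
Proof.
have w_over n : all (fun a => a \in [set: A]) (w n) by apply/allP => a; rewrite in_setT.
have [phi [phi_incr w_her]] := has_hereditary_subseq_over w_over.
by exists phi; split=> //; apply: (w_her id ltnSn).
Qed.
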